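(* Let $\mathcal{M}$ be a uniform oriented matroid of rank $r=m-n$ on the ground set $[m]=\{1,\ldots,m\}$, with set of cocircuits $\mathcal{C}^\ast$ (uniform meaning every cocircuit has support of cardinality $m-r+1=n+1$). Identify each cocircuit $\tau$ with an $n$-dimensional face of the boundary $\partial\lozenge^m$ of the crosspolytope $\lozenge^m=\mathrm{conv}\{\pm e_1,\ldots,\pm e_m\}$, and for each $\tau\in\mathcal{C}^\ast$ let $\hat\tau$ be the $\mathbb{Z}_2$-valued simplicial cochain on $\partial\lozenge^m$ with $\hat\tau(\tau)=1$ and $\hat\tau(\theta)=0$ for every face $\theta\neq\tau$. Then the $n$-dimensional $\mathbb{Z}_2$-equivariant cochain $$ C_{\mathcal{M}}:=\sum_{\tau\in\mathcal{C}^\ast}\hat\tau\in C^n_{\mathbb{Z}_2}(\partial\lozenge^m;\mathbb{Z}_2) $$ is a cocycle representing the class $w_1^n\in H^n_{\mathbb{Z}_2}(\partial\lozenge^m;\mathbb{Z}_2)\cong H^n(\mathbb{R}P^{m-1};\mathbb{Z}_2)$, where $w_1$ is the first Stiefel–Whitney class of the free $\mathbb{Z}_2$-space $\partial\lozenge^m\cong S^{m-1}$ (antipodal action).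
   Context: A cocircuit $X\in\{0,+,-\}^m$ is identified with the face $\mathrm{conv}\{\,\mathrm{sign}(X_i)e_i : X_i\neq0\,\}$ of $\lozenge^m$, where $+e_i$ and $-e_i$ correspond to signs $+$ and $-$. The simplicial complex $\partial\lozenge^m$ carries the free involution $x\mapsto -x$; $\mathbb{Z}_2$-equivariant (invariant) cochains are identified with cochains on the quotient $\partial\lozenge^m/\mathbb{Z}_2\cong\mathbb{R}P^{m-1}$, and $w_1$ is the first Stiefel–Whitney class of the double cover $S^{m-1}\to\mathbb{R}P^{m-1}$ (the generator of $H^1(\mathbb{R}P^{m-1};\mathbb{Z}_2)$). *)

From HB Require Import structures.
From mathcomp Require Import all_boot all_algebra.

Set Implicit Arguments.
Unset Strict Implicit.
Unset Printing Implicit Defensive.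

Import GRing.Theory.
Local Open Scope ring_scope.

(* Sign vectors in {0,+,-}^m : None = 0, Some true = +, Some false = - . *)
Definition signvec (m : nat) := {ffun 'I_m -> option bool}.

Section SignVectors.
Variable m : nat.
Implicit Types (X Y Z : signvec m).

Definition supp X : {set 'I_m} := [set i | X i != None].
Definition posp X : {set 'I_m} := [set i | X i == Some true].
Definition negp X : {set 'I_m} := [set i | X i == Some false].
Definition opp_sv X : signvec m := [ffun i => omap negb (X i)].
Definition zero_sv : signvec m := [ffun => None].

(* Cocircuit axioms of an oriented matroid on the ground set [m]
   (Bjorner--Las Vergnas--Sturmfels--White--Ziegler, Def. 3.2.1,
   applied to the cocircuits). *)
Definition is_OM_cocircuits (C : {set signvec m}) : Prop :=
  [/\ zero_sv \notin C,
      (forall X, X \in C -> opp_sv X \in C),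
      (forall X Y, X \in C -> Y \in C -> supp X \subset supp Y ->
                   X = Y \/ X = opp_sv Y)
    & (forall X Y e, X \in C -> Y \in C -> X <> opp_sv Y ->
         e \in posp X -> e \in negp Y ->
         exists2 Z, Z \in C &
           (posp Z \subset (posp X :|: posp Y) :\ e) /\
           (negp Z \subset (negp X :|: negp Y) :\ e))].

Definition uniform_of_rank (r : nat) (C : {set signvec m}) : Prop :=
  (forall X, X \in C -> #|supp X| = (m - r).+1)%N /\
  (forall S : {set 'I_m}, #|S| = (m - r).+1 -> exists2 X, X \in C & supp X = S)%N.

(* A nonzero sign vector X is the face conv{sign(X_i) e_i : X_i <> 0} of the
   boundary of the crosspolytope; its dimension is #|supp X| - 1.
   Z_2-valued cochains: functions on faces (a k-cochain is only evaluated on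
   faces X with #|supp X| = k+1). *)
Definition cochain := signvec m -> 'F_2.

Definition hat (tau : signvec m) : cochain := fun X => (X == tau)%:R.

Definition z2_invariant (c : cochain) : Prop := forall X, c (opp_sv X) = c X.

Definition delete X (i : 'I_m) : signvec m :=
  [ffun j => if j == i then None else X j].

Definition cobound (c : cochain) : cochain :=
  fun X => \sum_(i in supp X) c (delete X i).

Definition cocycle (k : nat) (c : cochain) : Prop :=
  forall X, #|supp X| = k.+2 -> cobound c X = 0.

Definition is_cochain (k : nat) (c : cochain) : Prop :=
  forall X, c X != 0 -> #|supp X| = k.+1.

(* c1 and c2 represent the same class in H^k of the complex of
   Z_2-invariant cochains (= H^k(RP^{m-1}; Z_2)): they differ on k-faces by
   the coboundary of an invariant (k-1)-cochain (b = 0 when k = 0). *)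
Definition cohomologous (k : nat) (c1 c2 : cochain) : Prop :=
  exists b : cochain,
    [/\ (forall X, b X != 0 -> (0 < k)%N /\ #|supp X| = k),
        z2_invariant b
      & forall X, #|supp X| = k.+1 -> c1 X = c2 X + cobound b X].

(* Alexander--Whitney cup product, vertices of each face ordered by their
   index in [m] (an order preserved by the antipodal map, so this is the
   cup product of the quotient Delta-complex RP^{m-1}). *)
Definition ssupp X : seq 'I_m := [seq i <- enum 'I_m | X i != None].
Definition restrict X (s : seq 'I_m) : signvec m :=
  [ffun i => if i \in s then X i else None].
Definition front (p : nat) X := restrict X (take p.+1 (ssupp X)).
Definition back (p : nat) X := restrict X (drop p (ssupp X)).
Definition cup (p : nat) (a b : cochain) : cochain :=
  fun X => a (front p X) * b (back p X).

(* The standard cocycle representing w_1 of the double cover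
   S^{m-1} -> RP^{m-1}: an edge [eps_i e_i, eps_j e_j] gets value 1 iff the
   two signs differ (lift of the edge leaves the fundamental domain
   {+e_1, ..., +e_m}). *)
Definition w1 : cochain :=
  fun X => ([exists i, X i == Some true] && [exists i, X i == Some false])%:R.

Fixpoint w1pow (k : nat) : cochain :=
  match k with
  | 0 => fun _ => 1
  | k'.+1 => cup k' (w1pow k') w1
  end.

Definition CM (C : {set signvec m}) : cochain :=
  fun X => \sum_(tau in C) hat tau X.

End SignVectors.

(* C_M is a cocycle because, on a face X with n+2 nonzero signs, the facets of
   X that are cocircuits come in pairs: cocircuit elimination, starting from a
   cocircuit supported on another facet and walking towards X, produces a
   partner for any such facet, and elimination also excludes three of them.
   The cup power w_1^n takes value 1 on an n-face exactly when its signs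
   alternate along the increasing order of its support.  The cohomology of
   invariant cochains is computed by induction on the number of coordinates,
   the crosspolytope on k+1 coordinates being the suspension of the one on k:
   an invariant n-cocycle is the coboundary of an invariant cochain as soon as
   its sum over the top cell of RP^n (the n-faces supported on the first n+1
   coordinates with last sign +) vanishes.  On that cell C_M and w_1^n both
   sum to 1 (a unique cocircuit, resp. a unique alternating sign vector), so
   C_M + w_1^n is an invariant coboundary. *)

From HB Require Import structures.
From mathcomp Require Import all_boot all_algebra.

Set Implicit Arguments.
Unset Strict Implicit.
Unset Printing Implicit Defensive.

Import GRing.Theory.
Local Open Scope ring_scope.

Lemma addrr_F2 (x : 'F_2) : x + x = 0.
Proof. by apply: addrr_pchar2; apply: pchar_Fp. Qed.

Lemma oppr_F2 (x : 'F_2) : - x = x.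
Proof. by apply: oppr_pchar2; apply: pchar_Fp. Qed.

Lemma sum_F2_involution (T : finType) (A : pred T) (F : T -> 'F_2) (f : T -> T) :
  (forall x, A x -> A (f x)) -> involutive f -> (forall x, A x -> f x != x) ->
  (forall x, A x -> F (f x) = F x) -> \sum_(x | A x) F x = 0.
Proof.
move=> Af fK fneq Ff; pose rk (x : T) : nat := enum_rank x.
rewrite (bigID (fun x => rk x < rk (f x))%N) /= [X in _ + X](reindex_inj (can_inj fK)) /=.
rewrite [X in _ + X](eq_big (fun x => A x && (rk x < rk (f x))%N) F).
- exact: addrr_F2.
- move=> x; rewrite fK -leqNgt; case Ax: (A x).
    rewrite Af //= ltn_neqAle andb_idl // => _.
    by apply: contra (fneq _ Ax) => /eqP/val_inj/enum_rank_inj xfx; rewrite -xfx.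
  by apply/negbTE/negP => /andP[/Af]; rewrite fK Ax.
- by move=> x /andP[Afx _]; rewrite -[in RHS](fK x) (Ff _ Afx).
Qed.

Lemma sum_bool_unique (R : nzSemiRingType) (T : finType) (P b : pred T) x0 :
  P x0 -> b x0 -> (forall x, P x -> b x -> x = x0) -> \sum_(x | P x) (b x)%:R = 1 :> R.
Proof.
move=> Px0 bx0 uniq_x0; rewrite (bigD1 x0) //= bx0 big1 ?addr0 // => x /andP[Px xx0].
by case bx: (b x) => //; rewrite (uniq_x0 x Px bx) eqxx in xx0.
Qed.

Section SignVectors.
Variable m : nat.
Implicit Types (X Y Z : signvec m) (i j q : 'I_m).

Lemma in_supp X i : (i \in supp X) = (X i != None).
Proof. by rewrite inE. Qed.

Lemma notin_supp X i : (i \notin supp X) = (X i == None).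
Proof. by rewrite in_supp negbK. Qed.

Lemma mem_ssupp X i : (i \in ssupp X) = (X i != None).
Proof. by rewrite mem_filter mem_enum andbT. Qed.

Lemma uniq_ssupp X : uniq (ssupp X).
Proof. by rewrite filter_uniq ?enum_uniq. Qed.

Lemma card_supp X : #|supp X| = size (ssupp X).
Proof.
rewrite cardE /ssupp enumT /enum_mem; congr size.
by apply: eq_filter => i; rewrite !inE.
Qed.

Lemma eq_ssupp X Y : supp X = supp Y -> ssupp X = ssupp Y.
Proof. by move=> eqXY; apply: eq_filter => i; rewrite -!in_supp eqXY. Qed.

Lemma supp_zero_sv : supp (zero_sv m) = set0.
Proof. by apply/setP => i; rewrite !inE ffunE. Qed.

Lemma supp_eq0 X : supp X = set0 -> X = zero_sv m.
Proof.
move=> X0; apply/ffunP => i; rewrite ffunE; apply/eqP.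
by rewrite -notin_supp X0 inE.
Qed.

Lemma in_supp_some X i : i \in supp X -> exists b, X i = Some b.
Proof. by rewrite in_supp; case: (X i) => // b; exists b. Qed.

Lemma omap_negb_eq (x y : option bool) :
  x != None -> y != None -> x != y -> omap negb x = y.
Proof. by case: x => [[]|] //; case: y => [[]|]. Qed.

Lemma supp1_eq_or_opp X Y i : supp X = [set i] -> supp Y = [set i] ->
  X = Y \/ X = opp_sv Y.
Proof.
move=> sX sY; have off j : j != i -> X j = None /\ Y j = None.
  by move=> ji; split; apply/eqP; rewrite -notin_supp ?sX ?sY inE.
have /in_supp_some [a Xi] : i \in supp X by rewrite sX set11.
have /in_supp_some [b Yi] : i \in supp Y by rewrite sY set11.
have [ab|ab] := eqVneq a b; [left | right]; apply/ffunP => j; rewrite ?ffunE;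
  (case: (eqVneq j i) => [->|ji]; last by case: (off j ji) => -> ->).
  by rewrite Xi Yi ab.
by rewrite Xi Yi; case: a b ab {Xi Yi} => [] [].
Qed.

Lemma opp_svK : involutive (@opp_sv m).
Proof. by move=> X; apply/ffunP => i; rewrite !ffunE; case: (X i) => // -[]. Qed.

Lemma supp_opp_sv X : supp (opp_sv X) = supp X.
Proof. by apply/setP => i; rewrite !inE ffunE; case: (X i). Qed.

Lemma ssupp_opp_sv X : ssupp (opp_sv X) = ssupp X.
Proof. by apply: eq_ssupp; rewrite supp_opp_sv. Qed.

Lemma delete_at X i : delete X i i = None.
Proof. by rewrite ffunE eqxx. Qed.

Lemma delete_ne X i j : j != i -> delete X i j = X j.
Proof. by rewrite ffunE => /negbTE ->. Qed.

Lemma supp_delete X i : supp (delete X i) = supp X :\ i.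
Proof. by apply/setP => j; rewrite !inE ffunE; case: (j == i). Qed.

Lemma card_supp_delete X i : i \in supp X -> #|supp (delete X i)| = #|supp X|.-1.
Proof. by move=> iX; rewrite supp_delete (cardsD1 i (supp X)) iX. Qed.

Lemma deleteC X i j : delete (delete X i) j = delete (delete X j) i.
Proof. by apply/ffunP => k; rewrite !ffunE; case: (k == i); case: (k == j). Qed.

Lemma delete_opp_sv X i : delete (opp_sv X) i = opp_sv (delete X i).
Proof. by apply/ffunP => j; rewrite !ffunE; case: (j == i). Qed.

Lemma supp_delete_sub X i (S : {set 'I_m}) :
  supp X \subset S -> supp (delete X i) \subset S.
Proof. by move=> sXS; rewrite supp_delete (subset_trans _ sXS) ?subD1set. Qed.

Definition ext Z q (b : bool) : signvec m :=
  [ffun j => if j == q then Some b else Z j].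

Lemma ext_at Z q b : ext Z q b q = Some b.
Proof. by rewrite ffunE eqxx. Qed.

Lemma supp_ext Z q b : supp (ext Z q b) = q |: supp Z.
Proof. by apply/setP => j; rewrite !inE ffunE; case: (j == q). Qed.

Lemma card_supp_ext Z q b : Z q = None -> #|supp (ext Z q b)| = #|supp Z|.+1.
Proof. by move=> Zq; rewrite supp_ext cardsU1 notin_supp Zq. Qed.

Lemma delete_ext Z q b : Z q = None -> delete (ext Z q b) q = Z.
Proof. by move=> Zq; apply/ffunP => j; rewrite !ffunE; case: eqP => [->|]. Qed.

Lemma delete_ext_ne Z q b i : i != q -> delete (ext Z q b) i = ext (delete Z i) q b.
Proof.
move=> iq; apply/ffunP => j; rewrite !ffunE.
by case: (eqVneq j i) => [->|//]; rewrite (negbTE iq).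
Qed.

Lemma ext_delete X q b : X q = Some b -> ext (delete X q) q b = X.
Proof. by move=> Xq; apply/ffunP => j; rewrite !ffunE; case: eqP => [->|]. Qed.

Lemma opp_sv_ext Z q b : opp_sv (ext Z q b) = ext (opp_sv Z) q (~~ b).
Proof. by apply/ffunP => j; rewrite !ffunE; case: (j == q). Qed.

Definition flip Z i : signvec m :=
  [ffun j => if j == i then omap negb (Z j) else Z j].

Lemma supp_flip Z i : supp (flip Z i) = supp Z.
Proof. by apply/setP => j; rewrite !inE ffunE; case: (j == i); case: (Z j). Qed.

Lemma flipK i : involutive (flip^~ i).
Proof.
by move=> Z; apply/ffunP => j; rewrite !ffunE; case: eqP => // _; case: (Z j) => // -[].
Qed.

Lemma flip_neq Z i : i \in supp Z -> flip Z i != Z.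
Proof.
rewrite in_supp => Zi; apply/eqP => /ffunP /(_ i); rewrite ffunE eqxx.
by case: (Z i) Zi => // -[].
Qed.

Lemma delete_flip Z i : delete (flip Z i) i = delete Z i.
Proof. by apply/ffunP => j; rewrite !ffunE; case: eqP. Qed.

End SignVectors.

Section Coboundary.
Variable m : nat.
Implicit Types (X Y Z : signvec m) (i j q : 'I_m) (f g c : cochain m).

Lemma coboundD f g X : cobound (f \+ g) X = cobound f X + cobound g X.
Proof. by rewrite /cobound big_split. Qed.

Lemma coboundZ a g X : cobound (fun Y => a * g Y) X = a * cobound g X.
Proof. by rewrite /cobound mulr_sumr. Qed.

Lemma cobound_zero_sv g : cobound g (zero_sv m) = 0.
Proof. by rewrite /cobound big_pred0 // => i; rewrite in_supp ffunE. Qed.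

Lemma cobound_comp_opp_sv c X : cobound (c \o @opp_sv m) X = cobound c (opp_sv X).
Proof.
by rewrite /cobound supp_opp_sv; apply: eq_bigr => i _; rewrite /= delete_opp_sv.
Qed.

Lemma cobound_invariant c : z2_invariant c -> z2_invariant (cobound c).
Proof.
move=> c_inv X; rewrite -cobound_comp_opp_sv; apply: eq_bigr => i _.
exact: c_inv.
Qed.

Lemma cobound_cobound g X : cobound (cobound g) X = 0.
Proof.
rewrite /cobound.
rewrite (eq_bigr (fun i => \sum_(j in supp (delete X i)) g (delete (delete X i) j))) //.
rewrite pair_big_dep /=; apply: (sum_F2_involution (f := fun p => (p.2, p.1))).
- move=> [i j] /=; rewrite supp_delete !inE => /and3P[iX ji jX].
  by rewrite jX delete_ne // eq_sym.
- by case.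
- move=> [i j] /=; rewrite supp_delete !inE => /and3P[_ ji _].
  by apply: contra ji => /eqP [->].
- by move=> [i j] _ /=; rewrite deleteC.
Qed.

Lemma sum_cobound_supp g (S : {set 'I_m}) : \sum_(Z | supp Z == S) cobound g Z = 0.
Proof.
rewrite /cobound pair_big_dep /=.
apply: (sum_F2_involution (f := fun p => (flip p.1 p.2, p.2))).
- by move=> [Z i] /=; rewrite supp_flip.
- by move=> [Z i] /=; rewrite flipK.
- move=> [Z i] /= /andP[_ iZ].
  by apply: contra (flip_neq iZ) => /eqP [->].
- by move=> [Z i] _ /=; rewrite delete_flip.
Qed.

Definition slice q b f : cochain m := fun Z => f (ext Z q b).

Lemma cobound_ext f Z q b : Z q = None ->
  cobound f (ext Z q b) = f Z + cobound (slice q b f) Z.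
Proof.
move=> Zq; rewrite /cobound supp_ext big_setU1 /= ?notin_supp ?Zq //.
rewrite delete_ext //; congr (_ + _); apply: eq_bigr => i iZ.
by rewrite delete_ext_ne //; apply: contraTneq iZ => ->; rewrite notin_supp Zq.
Qed.

(* A face X with [X q = Some b] is the join of the vertex [b e_q] with
   [delete X q]; [cone q gt gf] transports [gt] and [gf] to these joins. *)
Definition cone q (gt gf : cochain m) : cochain m :=
  fun X => if X q is Some b then (if b then gt else gf) (delete X q) else 0.

Lemma cobound_cone_some q gt gf X b : X q = Some b ->
  cobound (cone q gt gf) X = cobound (if b then gt else gf) (delete X q).
Proof.
move=> Xq; rewrite -{1}(ext_delete Xq) cobound_ext ?delete_at //.
rewrite /cone delete_at add0r; apply: eq_bigr => i; rewrite /slice.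
rewrite supp_delete !inE => /andP[iq _].
by rewrite ext_at delete_ext // delete_ne 1?eq_sym // delete_at.
Qed.

Lemma cobound_cone_none q gt gf X : X q = None -> cobound (cone q gt gf) X = 0.
Proof.
move=> Xq; rewrite /cobound big1 // => i _.
by rewrite /cone ffunE Xq if_same.
Qed.

Lemma cone_invariant q g : z2_invariant (cone q g (g \o @opp_sv m)).
Proof.
move=> X; rewrite /cone ffunE.
by case: (X q) => [[]|] //=; rewrite delete_opp_sv ?opp_svK.
Qed.

End Coboundary.

Section InitialSegments.
Variable m : nat.
Implicit Types (X Y Z W : signvec m) (p q : 'I_m) (f g c : cochain m).

Definition iseg k : {set 'I_m} := [set i : 'I_m | (i < k)%N].

Definition allplus k : signvec m := [ffun i : 'I_m => if (i < k)%N then Some true else None].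

Lemma supp_allplus k : supp (allplus k) = iseg k.
Proof. by apply/setP => i; rewrite !inE ffunE; case: (i < k)%N. Qed.

Lemma card_iseg k : (k <= m)%N -> #|iseg k| = k.
Proof.
move=> km; have -> : iseg k = [set widen_ord km j | j : 'I_k].
  apply/setP => i; rewrite !inE; apply/idP/imsetP => [ik | [j _ ->]] //=.
  by exists (Ordinal ik) => //; apply: val_inj.
by rewrite card_imset ?card_ord // => i j /(congr1 val) /= /val_inj.
Qed.

Lemma card_iseg_ord q : #|iseg q| = q.
Proof. exact/card_iseg/ltnW. Qed.

Lemma isegS q : iseg q.+1 = q |: iseg q.
Proof. by apply/setP => i; rewrite !inE ltnS leq_eqVlt val_eqE. Qed.

Lemma notin_iseg q : q \notin iseg q.
Proof. by rewrite inE ltnn. Qed.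

Lemma sub_iseg_ord X : supp X \subset iseg m.
Proof. by apply/subsetP => i _; rewrite inE ltn_ord. Qed.

Lemma card_supp_iseg X k : (k <= m)%N -> supp X \subset iseg k -> (#|supp X| <= k)%N.
Proof. by move=> km /subset_leq_card; rewrite card_iseg. Qed.

Lemma supp_iseg_at X q : supp X \subset iseg q -> X q = None.
Proof.
move=> /subsetP sXq; apply/eqP; rewrite -notin_supp.
by apply/negP => /sXq; apply/negP/notin_iseg.
Qed.

Lemma supp_isegS X q : supp X \subset iseg q.+1 -> X q = None -> supp X \subset iseg q.
Proof.
move=> /subsetP sXq Xq; apply/subsetP => i iX.
have := sXq i iX; rewrite isegS !inE => /orP[/eqP iq|//].
by move: iX; rewrite iq in_supp Xq.
Qed.

Lemma supp_ext_iseg Z q b : supp Z \subset iseg q -> supp (ext Z q b) \subset iseg q.+1.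
Proof. by move=> sZq; rewrite supp_ext isegS setUS. Qed.

Definition top_sum k f := \sum_(X | supp X == iseg k) f X.

Lemma top_sum0 f : top_sum 0 f = f (zero_sv m).
Proof.
have iseg0 : iseg 0 = set0 by apply/setP => i; rewrite !inE.
rewrite /top_sum (big_pred1 (zero_sv m)) // => X; rewrite iseg0.
by apply/eqP/eqP => [/supp_eq0 // | ->]; apply: supp_zero_sv.
Qed.

Lemma top_sum_slice q b f :
  \sum_(X | (supp X == iseg q.+1) && (X q == Some b)) f X = top_sum q (slice q b f).
Proof.
rewrite (reindex_onto (fun Z => ext Z q b) (fun X => delete X q)) /=; last first.
  by move=> X /andP[_ /eqP Xq]; apply: ext_delete.
apply: eq_bigl => Z; rewrite ext_at eqxx andbT supp_ext isegS.
apply/idP/idP => [/andP[/eqP qZ /eqP eZ] | /eqP Zq].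
  have Zq : Z q = None by rewrite -eZ delete_at.
  by rewrite -(setU1K (notin_iseg q)) -qZ setU1K // notin_supp Zq.
by rewrite Zq delete_ext ?eqxx // (@supp_iseg_at _ q) // Zq.
Qed.

Lemma top_sum_slices q f :
  top_sum q.+1 f = top_sum q (slice q true f) + top_sum q (slice q false f).
Proof.
rewrite -!top_sum_slice /top_sum (bigID (fun X => X q == Some true)) /=.
congr (_ + _); apply: eq_bigl => X.
case: (eqVneq (supp X) (iseg q.+1)) => //= sX.
have : q \in supp X by rewrite sX isegS setU11.
by rewrite in_supp; case: (X q) => // -[].
Qed.

End InitialSegments.

Section CrosspolytopeCohomology.
Variable m : nat.
Implicit Types (X Y Z W : signvec m) (p q : 'I_m) (f g c : cochain m).

(* [s] is a support size, i.e. dimension + 1, and the empty face counts: these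
   are conditions in the augmented cochain complex of the crosspolytope on the
   first [k] coordinates. *)
Definition cocycle_on k s f :=
  forall X, supp X \subset iseg m k -> #|supp X| = s -> cobound f X = 0.

Definition coboundary_on k s f g :=
  forall X, supp X \subset iseg m k -> #|supp X| = s -> f X = cobound g X.

Lemma cocycle_on_le k s f : cocycle_on k.+1 s f -> cocycle_on k s f.
Proof.
move=> fcoc X sXk; apply: fcoc; apply: subset_trans sXk _.
by apply/subsetP => i; rewrite !inE => /ltnW.
Qed.

Lemma coboundary_on_gt k s f g : (k <= m)%N -> (k < s)%N -> coboundary_on k s f g.
Proof.
move=> km ks X sXk sX; have := card_supp_iseg km sXk.
by rewrite sX leqNgt ks.
Qed.

Lemma coboundary_on0 k f g : f (zero_sv m) = 0 -> coboundary_on k 0 f g.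
Proof.
move=> f0 X _ /eqP; rewrite cards_eq0 => /eqP/supp_eq0 ->.
by rewrite f0 cobound_zero_sv.
Qed.

Lemma coboundary_on_opp_sv k s f g :
  coboundary_on k s f g -> coboundary_on k s (f \o @opp_sv m) (g \o @opp_sv m).
Proof.
move=> fg X sXk sX; rewrite cobound_comp_opp_sv /=.
by apply: fg; rewrite supp_opp_sv.
Qed.

Lemma top_sum_cocycle q f : cocycle_on q.+1 q.+1 f -> top_sum q f = 0.
Proof.
move=> fcoc; rewrite -(sum_cobound_supp (slice q true f) (iseg m q)).
apply: eq_bigr => Z /eqP sZ.
have Zq : Z q = None by apply: supp_iseg_at; rewrite sZ.
have := fcoc (ext Z q true); rewrite supp_ext_iseg ?sZ // card_supp_ext // sZ.
rewrite card_iseg_ord cobound_ext // => /(_ isT erefl) /eqP.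
by rewrite addr_eq0 oppr_F2 => /eqP.
Qed.

Lemma slice_cocycle q s f g0 b : coboundary_on q s.+1 f g0 ->
  cocycle_on q.+1 s.+2 f -> cocycle_on q s.+1 (slice q b (f \+ cobound g0)).
Proof.
move=> fg0 fcoc Z sZq sZ; have Zq := supp_iseg_at sZq.
have ext_coc : cobound f (ext Z q b) = 0.
  by apply: fcoc; rewrite ?supp_ext_iseg ?card_supp_ext ?sZ.
have := coboundD f (cobound g0) (ext Z q b).
rewrite ext_coc cobound_cobound addr0 cobound_ext //= fg0 // addrr_F2 add0r.
by move=> <-.
Qed.

Lemma coboundary_on_succ p s f g0 gt gf :
  coboundary_on p s.+1 f g0 ->
  coboundary_on p s (slice p true (f \+ cobound g0)) gt ->
  coboundary_on p s (slice p false (f \+ cobound g0)) gf ->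
  coboundary_on p.+1 s.+1 f (g0 \+ cone p gt gf).
Proof.
move=> fg0 fgt fgf X sXp sX; rewrite coboundD.
suff -> : cobound (cone p gt gf) X = f X + cobound g0 X.
  by rewrite addrCA addrr_F2 addr0.
case Xp: (X p) => [b|]; last first.
  by rewrite cobound_cone_none // fg0 ?addrr_F2 // supp_isegS.
have sXd : supp (delete X p) \subset iseg m p.
  by apply: supp_isegS; [apply: supp_delete_sub | apply: delete_at].
have cXd : #|supp (delete X p)| = s by rewrite card_supp_delete ?sX // in_supp Xp.
rewrite (cobound_cone_some _ _ Xp).
by case: b Xp => Xp; rewrite -?fgt -?fgf // /slice ext_delete.
Qed.

Lemma cobound_hat_allplus_ext q b Z : supp Z \subset iseg m q ->
  cobound (hat (allplus m q)) (ext Z q b) = hat (allplus m q) Z.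
Proof.
move=> sZq; rewrite cobound_ext ?supp_iseg_at // /cobound big1 ?addr0 // => i _.
rewrite /slice /hat; case: eqP => // /ffunP /(_ q).
by rewrite ext_at ffunE ltnn.
Qed.

Lemma top_sum_hat k W : supp W = iseg m k -> top_sum k (hat W) = 1.
Proof.
move=> sW; rewrite /top_sum (bigD1 W) ?sW //= /hat eqxx big1 ?addr0 //.
by move=> X /andP[_ /negbTE ->].
Qed.

Lemma top_sum_slice_correction q f (a := top_sum q (slice q true f)) :
  top_sum q (slice q true (f \+ cobound (fun X => a * hat (allplus m q) X))) = 0.
Proof.
rewrite /top_sum big_split /= -/(top_sum q _) -/a.
rewrite (eq_bigr (fun Z => a * hat (allplus m q) Z)) => [|Z /eqP sZ].
  by rewrite -mulr_sumr -/(top_sum q _) top_sum_hat ?supp_allplus // mulr1 addrr_F2.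
by rewrite coboundZ cobound_hat_allplus_ext ?sZ.
Qed.

(* After subtracting the coboundary of a primitive on the equator, each
   hemisphere slice of f is a cocycle one degree lower on the equator, and
   coning off primitives of the slices gives a primitive of f.  In top degree
   the upper slice is first made to sum to 0 by adjusting g0 on a top face of
   the equator; the lower slice then also sums to 0, as f does. *)
Lemma crosspolytope_coboundary k s f : (k <= m)%N -> (s <= k)%N ->
  cocycle_on k s.+1 f -> (s = k -> top_sum k f = 0) -> exists g, coboundary_on k s f g.
Proof.
elim: k s f => [|k IH] s f km sk fcoc ftop.
  move: sk; rewrite leqn0 => /eqP s0; subst s.
  by exists f; apply: coboundary_on0; rewrite -top_sum0 ftop.
pose p := Ordinal km.
have [g0 [fg0 g0top]] : exists g0, coboundary_on p s f g0 /\
    (s = k.+1 -> top_sum p (slice p true (f \+ cobound g0)) = 0).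
  case: (leqP s k) => [sk' | ks]; last first.
    have -> : s = k.+1 by apply/eqP; rewrite eqn_leq sk ks.
    exists (fun X => top_sum p (slice p true f) * hat (allplus m p) X).
    split=> [|_]; first exact: coboundary_on_gt (ltnW km) (ltnSn k).
    exact: top_sum_slice_correction.
  have ftop' : s = k -> top_sum k f = 0.
    by move=> e; apply: (top_sum_cocycle (q := p)); move: fcoc; rewrite e.
  have [g0 fg0] := IH s f (ltnW km) sk' (cocycle_on_le fcoc) ftop'.
  by exists g0; split => // e; move: sk'; rewrite e ltnn.
case: s => [|s] in sk fcoc ftop fg0 g0top *.
  exists g0; apply: coboundary_on0.
  by rewrite fg0 ?cobound_zero_sv ?supp_zero_sv ?sub0set ?cards0.
have slice_top b : s = k -> top_sum p (slice p b (f \+ cobound g0)) = 0.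
  move=> e; have total : top_sum p.+1 (f \+ cobound g0) = 0.
    by rewrite /top_sum big_split /= sum_cobound_supp addr0; apply: ftop; rewrite e.
  have := top_sum_slices p (f \+ cobound g0).
  rewrite total g0top ?e // add0r.
  by case: b => [_|<-] //; rewrite g0top ?e.
have [gt fgt] := IH s _ (ltnW km) sk (slice_cocycle true fg0 fcoc) (slice_top true).
have [gf fgf] := IH s _ (ltnW km) sk (slice_cocycle false fg0 fcoc) (slice_top false).
by exists (g0 \+ cone p gt gf); exact: (coboundary_on_succ fg0 fgt fgf).
Qed.

(* Evaluation on the top cell of the standard cell structure of RP^q. *)
Definition half_sum q c := top_sum q (slice q true c).

Lemma half_sumE q c :
  half_sum q c = \sum_(X | (supp X == iseg m q.+1) && (X q == Some true)) c X.
Proof. by rewrite top_sum_slice. Qed.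

Lemma half_sumD q f g : half_sum q (f \+ g) = half_sum q f + half_sum q g.
Proof. exact: big_split. Qed.

Lemma slice_false_invariant q c :
  z2_invariant c -> slice q false c =1 slice q true c \o @opp_sv m.
Proof. by move=> c_inv Z; rewrite /slice /= -c_inv opp_sv_ext. Qed.

(* The same suspension argument, with the antipodal image of the primitive of
   the upper slice as primitive of the lower one. *)
Lemma projective_coboundary k q c : (k <= m)%N -> (q < k)%N -> z2_invariant c ->
  cocycle_on k q.+2 c -> half_sum q c = 0 ->
  exists2 b, z2_invariant b & coboundary_on k q.+1 c b.
Proof.
elim: k => [//|k IH] km qk c_inv ccoc chalf; pose p := Ordinal km.
have [b0 b0_inv [cb0 b0top]] : exists2 b0, z2_invariant b0 &
    coboundary_on p q.+1 c b0 /\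
    (q = k :> nat -> top_sum p (slice p true (c \+ cobound b0)) = 0).
  case: (ltnP q k) => [qk' | kq].
    have [b0 b0_inv cb0] := IH (ltnW km) qk' c_inv (cocycle_on_le ccoc) chalf.
    by exists b0 => //; split => // e; move: qk'; rewrite e ltnn.
  exists (fun _ => 0) => //; split; first exact: coboundary_on_gt (ltnW km) _.
  move=> e; have -> : p = q by apply: val_inj.
  rewrite -chalf; apply: eq_bigr => Z _.
  by rewrite /slice /= /cobound big1 ?addr0.
have [h ch] := crosspolytope_coboundary (ltnW km) qk (slice_cocycle true cb0 ccoc) b0top.
exists (b0 \+ cone p h (h \o @opp_sv m)).
  by move=> X; rewrite /= b0_inv cone_invariant.
apply: (coboundary_on_succ cb0 ch) => X sX cX.
rewrite slice_false_invariant; first exact: (coboundary_on_opp_sv ch).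
by move=> Y; rewrite /= c_inv cobound_invariant.
Qed.

Lemma cohomologous_ge n (c1 c2 : cochain m) : (m <= n)%N -> cohomologous n c1 c2.
Proof.
move=> mn; exists (fun _ => 0); split => // X cX.
by have := max_card (supp X); rewrite card_ord cX ltnNge mn.
Qed.

Lemma cohomologous_of_coboundary n c1 c2 b : (0 < n)%N -> z2_invariant b ->
  coboundary_on m n.+1 (c1 \+ c2) b -> cohomologous n c1 c2.
Proof.
move=> n_gt0 b_inv cb; exists (fun X => if #|supp X| == n then b X else 0); split.
- by move=> X; case: (#|supp X| =P n) => [-> _ | _]; rewrite ?eqxx.
- by move=> X; rewrite supp_opp_sv b_inv.
move=> X cX; have /= cXb := cb X (sub_iseg_ord X) cX.
have -> : cobound (fun Y => if #|supp Y| == n then b Y else 0) X = cobound b X.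
  by apply: eq_bigr => i iX; rewrite card_supp_delete // cX eqxx.
by rewrite -cXb addrCA addrr_F2 addr0.
Qed.

End CrosspolytopeCohomology.

Section Cocircuits.
Variables (m r : nat) (C : {set signvec m}).
Hypothesis C_OM : is_OM_cocircuits C.
Hypothesis C_uniform : uniform_of_rank r C.
Implicit Types (X Y Z N P Q : signvec m) (e f i j k t : 'I_m).

Lemma CM_in X : CM C X = (X \in C)%:R.
Proof.
rewrite /CM /hat; case: (boolP (X \in C)) => XC.
  rewrite (bigD1 X) //= eqxx big1 ?addr0 // => Y /andP[_ YX].
  by rewrite eq_sym (negbTE YX).
by rewrite big1 // => Y YC; case: eqP => // XY; rewrite XY YC in XC.
Qed.

Lemma opp_cocircuit X : X \in C -> opp_sv X \in C.
Proof. by case: C_OM => _ oppC _ _; apply: oppC. Qed.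

Lemma opp_cocircuitE X : (opp_sv X \in C) = (X \in C).
Proof. by apply/idP/idP => /opp_cocircuit; rewrite ?opp_svK. Qed.

Lemma CM_invariant : z2_invariant (CM C).
Proof. by move=> X; rewrite !CM_in opp_cocircuitE. Qed.

Lemma card_cocircuit X : X \in C -> #|supp X| = (m - r).+1.
Proof. by case: C_uniform => cardC _; apply: cardC. Qed.

Lemma CM_cochain : is_cochain (m - r) (CM C).
Proof.
move=> X; rewrite CM_in; case: (boolP (X \in C)) => [XC _ | _]; last by rewrite eqxx.
exact: card_cocircuit.
Qed.

Lemma exists_cocircuit (S : {set 'I_m}) :
  #|S| = (m - r).+1 -> exists2 X, X \in C & supp X = S.
Proof. by case: C_uniform => _; apply. Qed.

Lemma cocircuit_supp_sub X Y : X \in C -> Y \in C -> supp X \subset supp Y ->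
  X = Y \/ X = opp_sv Y.
Proof. by case: C_OM => _ _ suppC _; apply: suppC. Qed.

Lemma cocircuit_elim P Q e b : P \in C -> Q \in C -> P <> opp_sv Q ->
  P e = Some b -> Q e = Some (~~ b) ->
  exists2 Z, Z \in C & Z e = None /\
    forall f c, Z f = Some c -> P f = Some c \/ Q f = Some c.
Proof.
wlog -> : P Q b / b = true => [gen PC QC PQ Pe Qe|].
  case: b Pe Qe => Pe Qe; first exact: (gen P Q true).
  have QP : Q <> opp_sv P by move=> QP; apply: PQ; rewrite QP opp_svK.
  have [Z ZC [Ze ZPQ]] := gen Q P true erefl QC PC QP Qe Pe.
  by exists Z => //; split => // f c /ZPQ [];  [right | left].
move=> PC QC PQ Pe Qe; case: C_OM => _ _ _ elimC.
have [|| Z ZC [posZ negZ]] := elimC P Q e PC QC PQ; rewrite ?inE ?Pe ?Qe //.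
have ZPQ f c : Z f = Some c -> f != e /\ (P f = Some c \/ Q f = Some c).
  move: posZ negZ => /subsetP/(_ f) posZ /subsetP/(_ f) negZ.
  by case: c => Zf; [move: posZ | move: negZ]; rewrite !inE Zf eqxx => /(_ isT)
    /andP[fe /orP[] /eqP]; split => //; [left | right | left | right].
exists Z => //; split => [|f c /ZPQ [] //].
by case Ze: (Z e) => [c|] //; have [] := ZPQ e c Ze; rewrite eqxx.
Qed.

Lemma card_facet X t : #|supp X| = (m - r).+2 -> t \in supp X ->
  #|supp X :\ t| = (m - r).+1.
Proof. by move=> cX tX; move: cX; rewrite (cardsD1 t) tX => -[]. Qed.

Lemma cocircuit_in_face X P Q e b : #|supp X| = (m - r).+2 ->
  supp P \subset supp X -> supp Q \subset supp X -> e \in supp X ->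
  P \in C -> Q \in C -> P <> opp_sv Q -> P e = Some b -> Q e = Some (~~ b) ->
  exists2 Z, Z \in C & supp Z = supp X :\ e /\
    forall f c, Z f = Some c -> P f = Some c \/ Q f = Some c.
Proof.
move=> cX sPX sQX eX PC QC PQ Pe Qe.
have [Z ZC [Ze ZPQ]] := cocircuit_elim PC QC PQ Pe Qe.
exists Z => //; split => //; apply/eqP.
rewrite eqEcard card_facet // card_cocircuit // leqnn andbT.
apply/subsetP => f; rewrite in_supp in_setD1; case Zf: (Z f) => [c|] // _.
have -> /= : f != e by apply/eqP => fe; move: Zf; rewrite fe Ze.
by case: (ZPQ f c Zf) => PQf; [apply: (subsetP sPX) | apply: (subsetP sQX)];
  rewrite in_supp PQf.
Qed.

Lemma no_three_facet_cocircuits X i j k : #|supp X| = (m - r).+2 ->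
  i \in supp X -> j \in supp X -> k \in supp X -> i != j -> j != k -> i != k ->
  delete X i \in C -> delete X j \in C -> delete X k \in C -> False.
Proof.
move=> cX iX jX kX ij jk ik XiC XjC XkC.
have [a Xi] := in_supp_some iX; have [b Xj] := in_supp_some jX.
have [c Xk] := in_supp_some kX.
have XiXj : delete X i <> opp_sv (opp_sv (delete X j)).
  by rewrite opp_svK => /ffunP/(_ j); rewrite delete_at delete_ne 1?eq_sym // Xj.
have sXiX : supp (delete X i) \subset supp X by apply: supp_delete_sub.
have sXjX : supp (opp_sv (delete X j)) \subset supp X.
  by rewrite supp_opp_sv; apply: supp_delete_sub.
have Xik : delete X i k = Some c by rewrite delete_ne 1?eq_sym.
have Xjk : opp_sv (delete X j) k = Some (~~ c) by rewrite ffunE delete_ne 1?eq_sym // Xk.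
have [Z ZC [sZ ZXiXj]] :=
  cocircuit_in_face cX sXiX sXjX kX XiC (opp_cocircuit XjC) XiXj Xik Xjk.
have sZk : supp Z \subset supp (delete X k) by rewrite sZ supp_delete.
have [ZXk | ZXk] := cocircuit_supp_sub ZC XkC sZk.
  have Zi : Z i = Some a by rewrite ZXk delete_ne.
  case: (ZXiXj i a Zi); first by rewrite delete_at.
  by rewrite ffunE delete_ne // Xi; case: a {Xi Zi}.
have Zj : Z j = Some (~~ b) by rewrite ZXk ffunE delete_ne // Xj.
case: (ZXiXj j _ Zj); last by rewrite ffunE delete_at.
by rewrite delete_ne 1?eq_sym // Xj; case: b {Xj Zj}.
Qed.

Definition disagree X N : {set 'I_m} := [set f | (N f != None) && (N f != X f)].

Lemma agree_delete X N j : supp N = supp X :\ j -> disagree X N = set0 -> N = delete X j.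
Proof.
move=> sN D0; apply/ffunP => f; rewrite ffunE.
case: (eqVneq f j) => [->|fj]; first by apply/eqP; rewrite -notin_supp sN setD11.
case: (eqVneq (N f) None) => Nf.
  have : f \notin supp N by rewrite notin_supp Nf.
  by rewrite Nf sN in_setD1 fj notin_supp => /eqP ->.
by have := in_set0 f; rewrite -D0 inE Nf /= => /negbFE/eqP.
Qed.

Lemma disagree_elim X N i j t : #|supp X| = (m - r).+2 -> i \in supp X ->
  delete X i \in C -> N \in C -> j \in supp X :\ i -> supp N = supp X :\ j ->
  N i = X i -> t \in disagree X N ->
  exists2 Z, Z \in C & [/\ t \in supp X :\ i, supp Z = supp X :\ t, Z i = X i
                        & disagree X Z \proper disagree X N].
Proof.
move=> cX iX XiC NC jXi sN Ni; rewrite inE => /andP[Nt NXt].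
have : t \in supp X :\ j by rewrite -sN in_supp.
rewrite in_setD1 => /andP[tj tX]; have [b Xt] := in_supp_some tX.
have ti : t != i by apply: contra NXt => /eqP ->; rewrite Ni.
have Nt' : N t = Some (~~ b) by move: Nt NXt; rewrite Xt; case: (N t) => [[]|]; case: b {Xt}.
have XiN : delete X i <> opp_sv N.
  move: jXi; rewrite in_setD1 => /andP[ji jX] /ffunP/(_ j).
  have : j \notin supp N by rewrite sN setD11.
  rewrite notin_supp !ffunE (negbTE ji) => /eqP -> /= Xj.
  by move: jX; rewrite in_supp Xj.
have sNX : supp N \subset supp X by rewrite sN subD1set.
have sXiX : supp (delete X i) \subset supp X by apply: supp_delete_sub.
have Xit : delete X i t = Some b by rewrite delete_ne.
have [Z ZC [sZ ZXiN]] := cocircuit_in_face cX sXiX sNX tX XiC NC XiN Xit Nt'.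
have Zi : Z i = X i.
  have : i \in supp Z by rewrite sZ in_setD1 eq_sym ti.
  rewrite in_supp; case Zi: (Z i) => [c|] // _.
  by case: (ZXiN i c Zi) => [|<-]; rewrite ?delete_at.
exists Z => //; split; rewrite ?in_setD1 ?ti //.
apply/properP; split; last first.
  by exists t; rewrite !inE ?Nt ?NXt // -notin_supp sZ setD11.
apply/subsetP => f; rewrite !inE; case Zf: (Z f) => [c|] //= ZXf.
case: (ZXiN f c Zf) => [|-> //]; case: (eqVneq f i) => [-> | fi]; first by rewrite delete_at.
by rewrite delete_ne // => Xf; rewrite Xf eqxx in ZXf.
Qed.

Lemma facet_cocircuit_partner X i : #|supp X| = (m - r).+2 -> i \in supp X ->
  delete X i \in C -> exists2 j, j \in supp X :\ i & delete X j \in C.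
Proof.
move=> cX iX XiC.
have walk d N j : (#|disagree X N| < d)%N -> N \in C -> j \in supp X :\ i ->
    supp N = supp X :\ j -> N i = X i -> exists2 j, j \in supp X :\ i & delete X j \in C.
  elim: d N j => [//|d IH] N j dN NC jXi sN Ni.
  case: (set_0Vmem (disagree X N)) => [D0 | [t tD]].
    by exists j; rewrite -?(agree_delete sN D0).
  have [Z ZC [tXi sZ Zi DZN]] := disagree_elim cX iX XiC NC jXi sN Ni tD.
  by apply: (IH Z t) => //; apply: leq_trans (proper_card DZN) _; rewrite -ltnS.
have [j jXi] : exists j, j \in supp X :\ i.
  by apply/set0Pn; rewrite -card_gt0 card_facet.
have /andP[ji jX] : (j != i) && (j \in supp X) by rewrite -in_setD1.
have [W WC sW] := exists_cocircuit (card_facet cX jX).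
have Wi : W i != None by rewrite -in_supp sW in_setD1 eq_sym ji.
case: (eqVneq (W i) (X i)) => WXi; first exact: (walk _ W j (ltnSn _)).
apply: (walk _ (opp_sv W) j (ltnSn _)); rewrite ?opp_cocircuitE ?supp_opp_sv //.
by rewrite ffunE; apply: omap_negb_eq => //; rewrite -in_supp.
Qed.

Lemma CM_cocycle : cocycle (m - r) (CM C).
Proof.
move=> X cX; pose D := [set i in supp X | delete X i \in C].
have -> : cobound (CM C) X = #|D|%:R.
  rewrite /cobound -sum1_card natr_sum big_mkcond [RHS]big_mkcond /=.
  apply: eq_bigr => i _; rewrite CM_in /D [in RHS]inE.
  by case: (i \in supp X); case: (_ \in C).
have [->|[i]] := set_0Vmem D; first by rewrite cards0.
rewrite inE => /andP[iX XiC]; have [j jXi XjC] := facet_cocircuit_partner cX iX XiC.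
move: jXi; rewrite in_setD1 => /andP[ji jX].
have -> : D = [set i; j].
  apply/setP => k; rewrite /D in_set2 [in LHS]inE.
  apply/andP/orP => [[kX XkC] | [] /eqP -> //].
  case: (eqVneq k i) => [-> | ki]; first by left.
  case: (eqVneq k j) => [_ | kj]; first by right.
  have [] := no_three_facet_cocircuits cX iX jX kX _ _ _ XiC XjC XkC; by rewrite // eq_sym.
by rewrite cards2 eq_sym ji pchar_Fp_0.
Qed.

Lemma vertex_cocircuit X : (m - r = 0)%N -> #|supp X| = 1 -> X \in C.
Proof.
move=> n0 cX; have cXn : #|supp X| = (m - r).+1 by rewrite cX n0.
have [Y YC sY] := exists_cocircuit cXn.
have /cards1P [i sXi] : #|supp X| == 1 by apply/eqP.
have [-> | ->] := supp1_eq_or_opp sXi (etrans sY sXi) => //.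
exact: opp_cocircuit.
Qed.

Lemma CM_cohomologous0 : (m - r = 0)%N -> cohomologous 0 (CM C) (@w1pow m 0).
Proof.
move=> n0; exists (fun _ => 0); split => // X cX.
by rewrite CM_in vertex_cocircuit // /cobound big1 ?addr0.
Qed.

Lemma half_sum_CM (q : 'I_m) : (q = m - r :> nat)%N -> half_sum q (CM C) = 1.
Proof.
move=> qE; have cq : #|iseg m q.+1| = (m - r).+1 by rewrite card_iseg // -qE.
have [Y YC sY] := exists_cocircuit cq.
have Yq : Y q != None by rewrite -in_supp sY inE ltnSn.
pose X0 := if Y q == Some true then Y else opp_sv Y.
have X0C : X0 \in C by rewrite /X0; case: ifP => // _; apply: opp_cocircuit.
have sX0 : supp X0 = iseg m q.+1 by rewrite /X0; case: ifP; rewrite ?supp_opp_sv.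
have X0q : X0 q = Some true.
  by rewrite /X0; case: ifP => [/eqP //|]; rewrite ffunE; case: (Y q) Yq => [[]|].
rewrite half_sumE (eq_bigr (fun X => (X \in C)%:R)) => [|X _]; last exact: CM_in.
apply: (@sum_bool_unique _ _ _ _ X0); rewrite ?sX0 ?X0q ?eqxx //.
move=> X /andP[/eqP sX /eqP Xq] XC.
have sXX0 : supp X \subset supp X0 by rewrite sX sX0.
have [//|XX0] := cocircuit_supp_sub XC X0C sXX0.
by move: Xq; rewrite XX0 ffunE X0q.
Qed.

End Cocircuits.

Definition alternating (l : seq bool) := sorted (fun a b : bool => a != b) l.

Lemma alternating_cons2 x y t :
  alternating [:: x, y & t] = (x != y) && alternating (y :: t).
Proof. by []. Qed.

Lemma alternating_take (l : seq bool) k : size l = k.+2 ->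
  alternating l = alternating (take k.+1 l) && (nth false l k != nth false l k.+1).
Proof.
elim: k l => [|k IH] [|x [|y t]] // sl; first by case: t sl => //= _; rewrite andbT.
rewrite alternating_cons2 (IH (y :: t)); last by case: sl => /= ->.
by rewrite [take _ _]/= alternating_cons2 andbA.
Qed.

Lemma alternating_uniq (l1 l2 : seq bool) : size l1 = size l2 ->
  alternating l1 -> alternating l2 -> last true l1 = last true l2 -> l1 = l2.
Proof.
elim: l1 l2 => [|x l1 IH] [|y l2] // [sl].
case: l1 l2 sl IH => [|x' l1] [|y' l2] // sl IH; first by move=> _ _ /= ->.
rewrite !alternating_cons2 => /andP[xx' a1] /andP[yy' a2] last12.
have e12 := IH (y' :: l2) sl a1 a2 last12; rewrite e12; congr (_ :: _).
case: e12 xx' => -> _ xy'.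
by move: xy' yy'; clear; case: x; case: y; case: y'.
Qed.

Lemma alternating_map_iota (g : nat -> bool) a k :
  (forall j, g j != g j.+1) -> alternating (map g (iota a k)).
Proof.
move=> gg; elim: k a => [|[|k] IH] a //.
have -> : map g (iota a k.+2) = [:: g a, g a.+1 & map g (iota a.+2 k)] by [].
by rewrite alternating_cons2 gg; apply: (IH a.+1).
Qed.

Definition rem_at (T : Type) (l : seq T) j := take j l ++ drop j.+1 l.

Lemma rem_at0 (T : Type) (x : T) l : rem_at (x :: l) 0 = l.
Proof. by rewrite /rem_at /= drop0. Qed.

Lemma rem_atS (T : Type) (x : T) l j : rem_at (x :: l) j.+1 = x :: rem_at l j.
Proof. by []. Qed.

Lemma sum_alternating_rem_at (l : seq bool) : (2 <= size l)%N ->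
  \sum_(j < size l) ((alternating (rem_at l j))%:R : 'F_2) = 0.
Proof.
elim: l => [|x l IH] //; case: l IH => [|y [|z t]] // IH _.
  by rewrite /= !big_ord_recl big_ord0 /= addr0 addrr_F2.
have sum_tail : \sum_(j < (size t).+1) ((alternating (y :: rem_at (z :: t) j))%:R : 'F_2)
    = (alternating (z :: t))%:R.
  have := IH isT; rewrite big_ord_recl rem_at0.
  under eq_bigr do rewrite lift0 rem_atS.
  by move/eqP; rewrite addr_eq0 oppr_F2 => /eqP.
rewrite big_ord_recl rem_at0 big_ord_recl lift0 rem_atS rem_at0.
under eq_bigr do rewrite !lift0 !rem_atS alternating_cons2 -mulnb natrM.
rewrite -mulr_sumr sum_tail !alternating_cons2.
case: (alternating _); clear IH sum_tail.
all: by case: x; case: y; case: z; apply/eqP.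
Qed.

Section StiefelWhitney.
Variable m : nat.
Implicit Types (X Y Z : signvec m) (i q : 'I_m).

Definition signs X : seq bool := [seq X i == Some true | i <- ssupp X].

Lemma size_signs X : size (signs X) = #|supp X|.
Proof. by rewrite size_map card_supp. Qed.

Lemma mem_signs X b : (b \in signs X) = [exists i, X i == Some b].
Proof.
apply/mapP/existsP => [[i iX ->] | [i /eqP Xi]].
  by exists i; move: iX; rewrite mem_ssupp; case: (X i) => // -[].
by exists i; rewrite ?mem_ssupp Xi //; case: b {Xi}.
Qed.

Lemma signs_restrict X (s : seq 'I_m) :
  signs (restrict X s) = [seq X i == Some true | i <- ssupp X & i \in s].
Proof.
rewrite /signs; have -> : ssupp (restrict X s) = [seq i <- ssupp X | i \in s].
  rewrite /ssupp -[RHS]filter_predI; apply: eq_filter => i /=.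
  by rewrite ffunE; case: (i \in s).
by apply/eq_in_map => i; rewrite mem_filter ffunE => /andP[-> _].
Qed.

Lemma signs_front p X : signs (front p X) = take p.+1 (signs X).
Proof.
rewrite /front signs_restrict -map_take.
by have /(subseq_uniqP (uniq_ssupp X)) <- := take_subseq (ssupp X) p.+1.
Qed.

Lemma signs_back p X : signs (back p X) = drop p (signs X).
Proof.
rewrite /back signs_restrict -map_drop.
by have /(subseq_uniqP (uniq_ssupp X)) <- := drop_subseq (ssupp X) p.
Qed.

Lemma w1_edge Y : #|supp Y| = 2 ->
  w1 Y = (nth false (signs Y) 0 != nth false (signs Y) 1)%:R.
Proof.
rewrite /w1 -!mem_signs -size_signs; case: (signs Y) => [|a [|b []]] //= _.
by rewrite !inE; case: a; case: b.
Qed.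

Lemma w1pow_alternating k X : #|supp X| = k.+1 -> w1pow k X = (alternating (signs X))%:R.
Proof.
elim: k X => [|k IH] X cX /=.
  by rewrite -size_signs in cX; case: (signs X) cX => [|? []].
have cfront : #|supp (front k X)| = k.+1.
  by rewrite -size_signs signs_front size_takel // size_signs cX.
have cback : #|supp (back k X)| = 2.
  by rewrite -size_signs signs_back size_drop size_signs cX -addn2 addKn.
rewrite /cup IH // w1_edge // signs_front signs_back !nth_drop addn0 addn1.
by rewrite [in RHS](@alternating_take _ k) ?size_signs // -mulnb natrM.
Qed.

Lemma front_opp_sv p X : front p (opp_sv X) = opp_sv (front p X).
Proof. by apply/ffunP => i; rewrite !ffunE ssupp_opp_sv; case: (_ \in _). Qed.

Lemma back_opp_sv p X : back p (opp_sv X) = opp_sv (back p X).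
Proof. by apply/ffunP => i; rewrite !ffunE ssupp_opp_sv; case: (_ \in _). Qed.

Lemma w1_opp_sv X : w1 (opp_sv X) = w1 X.
Proof.
have signsE b : [exists i, opp_sv X i == Some b] = [exists i, X i == Some (~~ b)].
  by apply: eq_existsb => i; rewrite ffunE; case: (X i) => [[]|]; case: b.
by rewrite /w1 !signsE andbC.
Qed.

Lemma w1pow_invariant k : z2_invariant (@w1pow m k).
Proof. by elim: k => [|k IH] X //=; rewrite /cup front_opp_sv back_opp_sv IH w1_opp_sv. Qed.

Lemma ssupp_delete X i : ssupp (delete X i) = rem i (ssupp X).
Proof.
rewrite rem_filter ?uniq_ssupp // /ssupp -[RHS]filter_predI.
by apply: eq_filter => j /=; rewrite ffunE; case: (j == i).
Qed.

Lemma signs_delete X i : signs (delete X i) = rem_at (signs X) (index i (ssupp X)).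
Proof.
rewrite /signs ssupp_delete remE /rem_at -map_take -map_drop -map_cat.
apply/eq_in_map => j; rewrite -remE mem_rem_uniq ?uniq_ssupp // inE => /andP[ji _].
by rewrite delete_ne.
Qed.

Lemma w1pow_cocycle k : cocycle k (@w1pow m k).
Proof.
move=> X cX.
have -> : cobound (w1pow k) X = \sum_(i <- ssupp X) w1pow k (delete X i).
  by rewrite /cobound /ssupp big_filter big_enum_cond; apply: eq_bigl => i; rewrite in_supp.
rewrite (eq_big_seq (fun i => (alternating (rem_at (signs X) (index i (ssupp X))))%:R)).
  have [x0 _] : exists x0 : 'I_m, x0 \in supp X by apply/card_gt0P; rewrite cX.
  rewrite (big_nth x0) big_mkord.
  rewrite (eq_bigr (fun j : 'I_(size (ssupp X)) => (alternating (rem_at (signs X) j))%:R)).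
    by rewrite -card_supp -size_signs sum_alternating_rem_at // size_signs cX.
  by move=> j _; rewrite index_uniq ?uniq_ssupp.
move=> i; rewrite mem_ssupp -in_supp => iX.
by rewrite w1pow_alternating ?signs_delete // card_supp_delete ?cX.
Qed.

Lemma val_ssupp_iseg X s : (s <= m)%N -> supp X = iseg m s -> map val (ssupp X) = iota 0 s.
Proof.
move=> sm sX; have -> : ssupp X = [seq i : 'I_m <- enum 'I_m | (nat_of_ord i < s)%N].
  by apply: eq_filter => i; rewrite -in_supp sX inE.
have := filter_map val (fun j => (j < s)%N) (enum 'I_m).
by rewrite val_enum_ord (filter_iota_ltn 0 sm) => <-.
Qed.

Lemma last_signs X q : supp X = iseg m q.+1 -> X q = Some true -> last true (signs X) = true.
Proof.
move=> sX Xq; have last_q : last q (ssupp X) = q.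
  apply: val_inj; rewrite -(last_map val) (val_ssupp_iseg (ltn_ord q) sX).
  by rewrite -addn1 iotaD last_cat.
by have := last_map (fun i => X i == Some true) (ssupp X) q; rewrite last_q Xq eqxx.
Qed.

Lemma signs_inj X Y : supp X = supp Y -> signs X = signs Y -> X = Y.
Proof.
move=> sXY eXY; apply/ffunP => i; case: (boolP (i \in supp X)) => iX; last first.
  have iY : i \notin supp Y by rewrite -sXY.
  by move: iX iY; rewrite !notin_supp => /eqP -> /eqP ->.
move: eXY; rewrite /signs (eq_ssupp sXY) => /eq_in_map/(_ i).
rewrite mem_ssupp -in_supp -sXY iX => /(_ isT).
have iY : i \in supp Y by rewrite -sXY.
by move: iX iY; rewrite !in_supp; case: (X i) => [[]|]; case: (Y i) => [[]|].
Qed.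

Definition alt_sv q : signvec m :=
  [ffun i : 'I_m => if (i <= q)%N then Some (odd (q.+1 + i)) else None].

Lemma half_sum_w1pow q : half_sum q (@w1pow m q) = 1.
Proof.
have sX0 : supp (alt_sv q) = iseg m q.+1.
  by apply/setP => i; rewrite !inE ffunE ltnS; case: (i <= q)%N.
have X0q : alt_sv q q = Some true by rewrite ffunE leqnn addSn addnn /= odd_double.
have signs_X0 : signs (alt_sv q) = map (fun j => odd (q.+1 + j)) (iota 0 q.+1).
  rewrite -(val_ssupp_iseg (ltn_ord q) sX0) -map_comp; apply/eq_in_map => i.
  by rewrite mem_ssupp /= ffunE; case: (i <= q)%N.
have alt_X0 : alternating (signs (alt_sv q)).
  by rewrite signs_X0; apply: alternating_map_iota => j; rewrite addnS /=; case: odd.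
rewrite half_sumE (eq_bigr (fun X => (alternating (signs X))%:R)) => [|X /andP[/eqP sX _]].
  apply: (@sum_bool_unique _ _ _ _ (alt_sv q)); rewrite ?sX0 ?X0q ?eqxx //.
  move=> X /andP[/eqP sX /eqP Xq] altX; apply: signs_inj; first by rewrite sX sX0.
  apply: alternating_uniq; rewrite ?size_signs ?sX ?sX0 //.
  by rewrite (last_signs sX Xq) (last_signs sX0 X0q).
by rewrite w1pow_alternating // sX card_iseg.
Qed.

End StiefelWhitney.

Theorem theorem4p1 (m r : nat) (C : {set signvec m}) :
  (r <= m)%N -> is_OM_cocircuits C -> uniform_of_rank r C ->
  [/\ is_cochain (m - r) (CM C), z2_invariant (CM C),
      cocycle (m - r) (CM C)
    & cohomologous (m - r) (CM C) (@w1pow m (m - r))].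
Proof.
move=> rm C_OM C_unif.
split; [exact: CM_cochain | exact: CM_invariant | exact: CM_cocycle |].
have [r0 | r_gt0] := posnP r; first by apply: cohomologous_ge; rewrite r0 subn0.
have [n0 | n_gt0] := posnP (m - r).
  by rewrite n0; exact: (CM_cohomologous0 C_OM C_unif n0).
have qm : (m - r < m)%N by rewrite ltn_subrL r_gt0 (leq_trans r_gt0 rm).
pose q := Ordinal qm; pose c := CM C \+ w1pow q.
have c_inv : z2_invariant c.
  by move=> X; rewrite /c /= (CM_invariant C_OM) (w1pow_invariant (m - r)).
have c_coc : cocycle_on m q.+2 c.
  by move=> X _ cX; rewrite coboundD (CM_cocycle C_OM C_unif) // w1pow_cocycle // addr0.
have c_half : half_sum q c = 0.
  by rewrite half_sumD (half_sum_CM C_OM C_unif) // half_sum_w1pow addrr_F2.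
have [b b_inv cb] := projective_coboundary (leqnn m) (ltn_ord q) c_inv c_coc c_half.
exact: cohomologous_of_coboundary n_gt0 b_inv cb.
Qed.
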